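(* Let $h>0$, $P>0$, $0<\zeta\le1$, $\sigma_A^2\ge0$, $\sigma_{\rm cov}^2>0$, $\sigma_{\rm rec}>0$, $P_{\rm s}^{\rm tgt}>0$, $0\le Q_{\rm req}\le\zeta hP$, and $P_S\ge P_I>0$. Let $\mathcal{Q}(x)=\frac1{\sqrt{2\pi}}\int_x^\infty e^{-t^2/2}\,dt$ and $\mathcal{M}=\{2^l: l\in\{1,2,\dots,10\}\}$. Consider (P1): maximize $R=(1-\alpha)\log_2 M$ over $\alpha\in[0,1]$, $\rho\in[0,1]$, $M\in\mathcal{M}$ subject to $$\frac{4(\sqrt M-1)}{\sqrt M}\,\mathcal{Q}\!\left(\sqrt{\frac{3}{M-1}\cdot\frac{(1-\rho)hP}{(1-\rho)\sigma_A^2+\sigma_{\rm cov}^2}}\right)\le P_{\rm s}^{\rm tgt},\qquad \alpha\zeta hP+(1-\alpha)\rho\zeta hP-(1-\alpha)P_S\ge Q_{\rm req};$$ (P2): maximize $R=(1-\alpha)\log_2 M$ over $\alpha\in[0,1]$, $M\in\mathcal{M}$ subject to $$\frac{2(M-1)}{M}\,\mathcal{Q}\!\left(\frac{1}{M-1}\cdot\frac{hP}{\sigma_{\rm rec}}\right)\le P_{\rm s}^{\rm tgt},\qquad \zeta hP-(1-\alpha)P_I\ge Q_{\rm req}.$$ Assume both problems are feasible, and let $(\alpha_1^*,\rho_1^*,M_1^* )$ be an optimal solution of (P1) with optimal value $R_1^*$ and $(\alpha_2^*,M_2^* )$ an optimal solution of (P2) with optimal value $R_2^*$. Then $\alpha_1^*\ge\alpha_2^*$.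 Moreover, if $M_1^*\le M_2^*$, then $R_1^*\le R_2^*$.
   Context: (P1) models a separated receiver (coherent $M$-QAM, on-off power splitting with decoder-off time fraction $\alpha$ and power splitting ratio $\rho$, decoding circuit power $P_S$); (P2) models an integrated receiver (pulse energy modulation, decoder-off fraction $\alpha$, decoding circuit power $P_I$). In both, $P_{\rm s}^{\rm tgt}$ is a symbol error rate target and $Q_{\rm req}$ a minimum net harvested energy; $\sigma_A^2$, $\sigma_{\rm cov}^2$ are antenna and conversion noise powers, $\sigma_{\rm rec}$ the rectifier noise standard deviation, $\zeta$ the harvesting efficiency, $hP$ the received power. *)

From Stdlib Require Import Reals Lra ClassicalEpsilon.
Open Scope R_scope.

(* Value of the Riemann integral of f over [a,b] (chosen via epsilon; it is
   the actual RiemannInt whenever f is Riemann integrable on [a,b]). *)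
Definition RInt_val (f : R -> R) (a b : R) : R :=
  epsilon (inhabits 0)
    (fun v => exists pr : Riemann_integrable f a b, RiemannInt pr = v).

Definition gauss_pdf (t : R) : R := / sqrt (2 * PI) * exp (- (t ^ 2) / 2).

Definition Qfun (x : R) : R :=
  epsilon (inhabits 0)
    (fun q => forall eps, eps > 0 -> exists B, forall b, b >= B ->
       Rabs (RInt_val gauss_pdf x b - q) < eps).

Definition log2 (x : R) : R := ln x / ln 2.

Definition inMset (M : R) : Prop :=
  exists l : nat, (1 <= l <= 10)%nat /\ M = 2 ^ l.

Definition rate (alpha M : R) : R := (1 - alpha) * log2 M.

Definition feasible1 (h P zeta sA2 scov2 Ps_tgt Qreq PS : R)
  (alpha rho M : R) : Prop :=
  0 <= alpha <= 1 /\ 0 <= rho <= 1 /\ inMset M /\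
  4 * (sqrt M - 1) / sqrt M *
    Qfun (sqrt (3 / (M - 1) * ((1 - rho) * h * P / ((1 - rho) * sA2 + scov2))))
    <= Ps_tgt /\
  alpha * zeta * h * P + (1 - alpha) * rho * zeta * h * P - (1 - alpha) * PS >= Qreq.

Definition optimal1 (h P zeta sA2 scov2 Ps_tgt Qreq PS : R)
  (alpha rho M : R) : Prop :=
  feasible1 h P zeta sA2 scov2 Ps_tgt Qreq PS alpha rho M /\
  forall a r m, feasible1 h P zeta sA2 scov2 Ps_tgt Qreq PS a r m ->
    rate a m <= rate alpha M.

Definition feasible2 (h P zeta srec Ps_tgt Qreq PI : R) (alpha M : R) : Prop :=
  0 <= alpha <= 1 /\ inMset M /\
  2 * (M - 1) / M * Qfun (1 / (M - 1) * (h * P / srec)) <= Ps_tgt /\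
  zeta * h * P - (1 - alpha) * PI >= Qreq.

Definition optimal2 (h P zeta srec Ps_tgt Qreq PI : R) (alpha M : R) : Prop :=
  feasible2 h P zeta srec Ps_tgt Qreq PI alpha M /\
  forall a m, feasible2 h P zeta srec Ps_tgt Qreq PI a m ->
    rate a m <= rate alpha M.

From Stdlib Require Import Reals Lra Lia.
Open Scope R_scope.

(* Only the energy constraints and the rate objective matter;
   the symbol-error constraints and the Q-function are never unfolded.
   1. Given an optimal (alpha1, rho1, M1) of (P1), the pair (alpha1, M2) is
      feasible for (P2): the symbol-error constraint of (P2) does not involve
      alpha, and the (P1) energy constraint with rho1 <= 1 and PI <= PS
      implies the (P2) energy constraint with the same alpha.
   2. Optimality of (alpha2, M2) then gives
      (1 - alpha1) log2 M2 <= (1 - alpha2) log2 M2, and since log2 M2 > 0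
      (every M in the modulation set is at least 2) this yields
      alpha1 >= alpha2.
   3. If moreover M1 <= M2, monotonicity of log2 together with
      1 - alpha1 <= 1 - alpha2 gives R1* <= R2*. *)

Lemma inMset_ge2 (M : R) : inMset M -> 2 <= M.
Proof.
  intros [l [Hl ->]].
  replace 2 with (2 ^ 1) at 1 by ring.
  apply Rle_pow; [lra | lia].
Qed.

Lemma ln_le_compat (x y : R) : 0 < x -> x <= y -> ln x <= ln y.
Proof.
  intros Hx Hxy.
  destruct (Rle_lt_or_eq_dec _ _ Hxy) as [Hlt | ->].
  - left; apply ln_increasing; assumption.
  - apply Rle_refl.
Qed.

Lemma log2_pos (x : R) : 1 < x -> 0 < log2 x.
Proof.
  intros Hx; unfold log2.
  apply Rdiv_lt_0_compat.
  - rewrite <- ln_1; apply ln_increasing; lra.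
  - pose proof ln_lt_2; lra.
Qed.

Lemma log2_le_compat (x y : R) : 0 < x -> x <= y -> log2 x <= log2 y.
Proof.
  intros Hx Hxy; unfold log2, Rdiv.
  apply Rmult_le_compat_r.
  - left; apply Rinv_0_lt_compat; pose proof ln_lt_2; lra.
  - apply ln_le_compat; assumption.
Qed.

Lemma energy_separated_to_integrated (E alpha rho PS PI Qreq : R) :
  0 <= E -> 0 <= alpha <= 1 -> rho <= 1 -> PI <= PS ->
  alpha * E + (1 - alpha) * rho * E - (1 - alpha) * PS >= Qreq ->
  E - (1 - alpha) * PI >= Qreq.
Proof.
  intros HE Ha Hrho HPIS Hcon.
  assert (Hwaste : 0 <= (1 - alpha) * (1 - rho) * E).
  { apply Rmult_le_pos; [apply Rmult_le_pos |]; lra. }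
  assert (Hdec : (1 - alpha) * PI <= (1 - alpha) * PS).
  { apply Rmult_le_compat_l; lra. }
  nra.
Qed.

Lemma rate_le_alpha_ge (a b M : R) :
  0 < log2 M -> rate a M <= rate b M -> b <= a.
Proof.
  unfold rate; intros Hl Hr.
  apply Rmult_le_reg_r in Hr; lra.
Qed.

Lemma rate_le_compat (a1 M1 a2 M2 : R) :
  a2 <= a1 <= 1 -> inMset M1 -> M1 <= M2 -> rate a1 M1 <= rate a2 M2.
Proof.
  intros Ha HM1 HM; unfold rate.
  pose proof (inMset_ge2 M1 HM1) as H2.
  apply Rmult_le_compat; try lra.
  - left; apply log2_pos; lra.
  - apply log2_le_compat; lra.
Qed.

Theorem proposition3
  (h P zeta sA2 scov2 srec Ps_tgt Qreq PS PI : R)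
  (Hh : h > 0) (HP : P > 0) (Hzeta : 0 < zeta <= 1)
  (HsA2 : sA2 >= 0) (Hscov2 : scov2 > 0) (Hsrec : srec > 0)
  (Htgt : Ps_tgt > 0) (HQreq : 0 <= Qreq <= zeta * h * P)
  (HPS : PS >= PI) (HPI : PI > 0)
  (alpha1 rho1 M1 alpha2 M2 : R)
  (Hopt1 : optimal1 h P zeta sA2 scov2 Ps_tgt Qreq PS alpha1 rho1 M1)
  (Hopt2 : optimal2 h P zeta srec Ps_tgt Qreq PI alpha2 M2) :
  alpha1 >= alpha2 /\
  (M1 <= M2 -> rate alpha1 M1 <= rate alpha2 M2).
Proof.
  destruct Hopt1 as [[Ha1 [Hr1 [HM1 [_ HE1]]]] _].
  destruct Hopt2 as [[Ha2 [HM2 [HS2 _]]] Hmax2].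
  assert (HE : 0 <= zeta * h * P).
  { left; apply Rmult_lt_0_compat; [apply Rmult_lt_0_compat |]; lra. }
  assert (Hfeas : feasible2 h P zeta srec Ps_tgt Qreq PI alpha1 M2).
  { split; [exact Ha1 |]; split; [exact HM2 |]; split; [exact HS2 |].
    apply (energy_separated_to_integrated (zeta * h * P) alpha1 rho1 PS PI);
      [exact HE | exact Ha1 | lra | lra |].
    replace (alpha1 * (zeta * h * P) + (1 - alpha1) * rho1 * (zeta * h * P))
      with (alpha1 * zeta * h * P + (1 - alpha1) * rho1 * zeta * h * P)
      by ring.
    exact HE1. }
  assert (Halpha : alpha2 <= alpha1).
  { apply (rate_le_alpha_ge alpha1 alpha2 M2); [| exact (Hmax2 _ _ Hfeas)].
    apply log2_pos; pose proof (inMset_ge2 M2 HM2); lra. }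
  split; [lra |].
  intros HM; apply rate_le_compat; [lra | exact HM1 | exact HM].
Qed.
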